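(* Let $\Gamma$ be a finitely generated group acting by homeomorphisms on a compact metrisable space $Y$. Then there exists a metric $d$ on $Y$ inducing its topology such that $\Gamma$ acts on $(Y,d)$ by Lipschitz homeomorphisms. Moreover, $d$ can be chosen so that $\dim_{AN}(Y,d)=\dim Y$.
   Context: $\dim Y$ is the Lebesgue covering dimension. The Assouad–Nagata dimension $\dim_{AN}(Y,d)$ is the least $k$ such that there is $C<\infty$ with the property that for every $R>0$ there is a cover $Y=U_0\cup\dots\cup U_k$ in which every $R$-component of every $U_j$ has diameter at most $CR$; an $R$-component of $U$ is a class of the equivalence relation on $U$ generated by identifying points at distance $<R$. *)

From HB Require Import structures.
From mathcomp Require Import all_boot all_order all_algebra.
From mathcomp Require Import all_classical all_reals topology.
From Stdlib Require Import Relations.Relation_Operators.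
Set Implicit Arguments. Unset Strict Implicit. Unset Printing Implicit Defensive.
Import Order.TTheory GRing.Theory Num.Theory.
Local Open Scope classical_set_scope.
Local Open Scope ring_scope.

Definition is_group (G : Type) (mul : G -> G -> G) (one : G) (inv : G -> G) : Prop :=
  [/\ forall a b c, mul a (mul b c) = mul (mul a b) c,
      forall a, mul one a = a,
      forall a, mul a one = a,
      forall a, mul (inv a) a = one &
      forall a, mul a (inv a) = one].

Inductive generated (G : Type) (mul : G -> G -> G) (one : G) (inv : G -> G)
    (S : set G) : G -> Prop :=
  | gen_base s : S s -> generated mul one inv S s
  | gen_one : generated mul one inv S one
  | gen_inv a : generated mul one inv S a -> generated mul one inv S (inv a)
  | gen_mul a b : generated mul one inv S a -> generated mul one inv S b ->
      generated mul one inv S (mul a b).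

Definition finitely_generated (G : Type) (mul : G -> G -> G) (one : G)
    (inv : G -> G) : Prop :=
  exists S : set G, finite_set S /\ forall g, generated mul one inv S g.

Definition is_action (G Y : Type) (mul : G -> G -> G) (one : G)
    (act : G -> Y -> Y) : Prop :=
  (forall y, act one y = y) /\
  (forall g h y, act (mul g h) y = act g (act h y)).

Definition is_metric (R : realType) (Y : Type) (d : Y -> Y -> R) : Prop :=
  [/\ forall x y, 0 <= d x y,
      forall x y, d x y = 0 <-> x = y,
      forall x y, d x y = d y x &
      forall x y z, d x z <= d x y + d y z].

Definition dball (R : realType) (Y : Type) (d : Y -> Y -> R) (x : Y) (r : R) :
  set Y := [set y | d x y < r].

Definition induces_topology (R : realType) (Y : topologicalType)
    (d : Y -> Y -> R) : Prop :=
  forall A : set Y, open A <->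
    (forall x, A x -> exists2 r : R, 0 < r & dball d x r `<=` A).

Definition metrisable (R : realType) (Y : topologicalType) : Prop :=
  exists d : Y -> Y -> R, is_metric d /\ induces_topology d.

Definition lipschitz (R : realType) (Y : Type) (d : Y -> Y -> R) (f : Y -> Y) :
  Prop := exists L : R, forall x y, d (f x) (f y) <= L * d x y.

Definition covers (Y : Type) (I : Type) (U : I -> set Y) : Prop :=
  forall y, exists i, U i y.

Definition covdim_le (Y : topologicalType) (n : nat) : Prop :=
  forall (k : nat) (U : 'I_k -> set Y),
    (forall i, open (U i)) -> covers U ->
    exists (m : nat) (V : 'I_m -> set Y),
      [/\ forall j, open (V j),
          covers V,
          forall j, exists i, V j `<=` U i &
          forall y, (#|[set j | `[< V j y >] ]| <= n.+1)%N].

Definition r_close (R : realType) (Y : Type) (d : Y -> Y -> R) (r : R)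
    (U : set Y) : Y -> Y -> Prop :=
  fun x y => [/\ U x, U y & d x y < r].

Definition r_component (R : realType) (Y : Type) (d : Y -> Y -> R) (r : R)
    (U : set Y) (x : Y) : set Y :=
  [set y | U x /\ U y /\ clos_refl_sym_trans Y (r_close d r U) x y].

Definition ANdim_le (R : realType) (Y : Type) (d : Y -> Y -> R) (n : nat) :
  Prop :=
  exists C : R, forall r : R, 0 < r ->
    exists U : 'I_n.+1 -> set Y,
      covers U /\
      forall j x y z, r_component d r (U j) x y -> r_component d r (U j) x z ->
        d y z <= C * r.

(* Fix a compatible metric d0 and let the generators and their inverses act as
   letters. For pseudometrics rho_i <= 2^-i dominated by d0, with
   rho_0 = min(d0, 1), put D(x, y) = sup_{i, w} 2^-|w| rho_i(w x, w y) over levels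
   i and words w. Prepending a letter costs a factor 2, so each generator is
   2-Lipschitz for D, and as only finitely many (i, w) contribute more than 2^-K,
   D induces the topology.
   If dim Y <= n, rho_j is built from bump functions of an open cover of order
   n + 1 on whose members all rho_i(w _, w _) with i, |w| < j oscillate by at most
   2^-j. Slicing the bump values into n + 1 slabs gives sets W_0, ..., W_n covering
   Y in which chains with rho_j-steps below 2^-j/(n+2) stay inside one member of
   the cover; so the r-components of the W_t, r ~ 2^-j/(n+2), have D-diameter at
   most 2^-j, i.e. dim_AN(Y, D) <= n. Conversely, on a compact space a
   Lebesgue-number argument turns AN-covers into open covers of order n + 1. *)

From HB Require Import structures.
From mathcomp Require Import all_boot all_order all_algebra.
From mathcomp Require Import all_classical all_reals topology.
From mathcomp Require Import finmap ring lra.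
From Stdlib Require Import Relations.Relation_Operators.
Set Implicit Arguments. Unset Strict Implicit. Unset Printing Implicit Defensive.
Import Order.TTheory GRing.Theory Num.Theory.
Local Open Scope classical_set_scope.
Local Open Scope ring_scope.

(* [compact_cover] is only available for pointed spaces. *)
Section PointedCopy.
Variables (Y : topologicalType) (y0 : Y).
Definition pointed_at : Type := Y.
HB.instance Definition _ := Topological.on pointed_at.
HB.instance Definition _ := isPointed.Build pointed_at y0.

Lemma pointed_cover_compact : compact [set: Y] -> cover_compact [set: pointed_at].
Proof. by rewrite -compact_cover. Qed.
End PointedCopy.

Lemma compact_fin_subcover (Y : topologicalType) (I : choiceType) (f : I -> set Y) :
  compact [set: Y] -> (forall i, open (f i)) -> covers f ->
  exists (p : nat) (h : 'I_p -> I), covers (f \o h).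
Proof.
move=> cpt f_open f_cover.
have [[y0 _]|Y0] := pselect (exists y : Y, True); last first.
  exists 0%N, (fun a : 'I_0 => False_rect I (notF (ltn_ord a))) => y.
  by case: Y0; exists y.
have [|D _ D_cover] := pointed_cover_compact y0 cpt (fun i (_ : setT i) => f_open i).
  by move=> y _; have [i fi] := f_cover y; exists i.
have [i0 _] := f_cover y0.
exists (size D), (fun a => nth i0 D a) => y.
have [i iD fiy] := D_cover y Logic.I.
have iD_lt : (index i D < size D)%N by rewrite index_mem.
by exists (Ordinal iD_lt); rewrite /= nth_index.
Qed.

Lemma open_forall_fin (Y : topologicalType) (T : finType) (P : T -> set Y) :
  (forall t, open (P t)) -> open [set z | forall t, P t z].
Proof.
move=> Po; rewrite openE => z Pz; apply: filter_forall => t.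
exact: open_nbhs_nbhs.
Qed.

Lemma open_gt_lipschitz (R : realType) (Y : topologicalType) (d : Y -> Y -> R)
    (g : Y -> R) (c : R) :
  induces_topology d -> 0 < c -> (forall x y, g x - g y <= c * d x y) ->
  forall a, open [set y | a < g y].
Proof.
move=> dtop c0 glip a; apply/dtop => y /= ay.
exists ((g y - a) / c); first by rewrite divr_gt0 // subr_gt0.
move=> z; rewrite /dball /= ltr_pdivlMr // mulrC => yz.
by have := glip y z; lra.
Qed.

Lemma compact_uniform_pos (R : realType) (Y : topologicalType) (I : Type)
    (g : I -> Y -> R) :
  compact [set: Y] -> (forall i a, open [set y | a < g i y]) ->
  (forall x, exists i, 0 < g i x) ->
  exists2 mu, 0 < mu & forall x, exists i, mu <= g i x.
Proof.
move=> cpt gopen /choice[ix ix_pos].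
pose Q x := [set y | g (ix x) x / 2 < g (ix x) y].
have Qcov : covers Q by move=> y; exists y; rewrite /Q /=; have := ix_pos y; lra.
have [p [h hQ]] := compact_fin_subcover cpt (fun x => gopen _ _) Qcov.
exists (\big[Num.min/1]_(a < p) (g (ix (h a)) (h a) / 2)).
  by apply/bigmin_gtP; split=> // a _; rewrite divr_gt0.
move=> x; have [a Qx] := hQ x; exists (ix (h a)).
apply: le_trans (ltW Qx); exact: bigmin_le.
Qed.

Definition halfpow {R : realType} (i : nat) : R := 2^-1 ^+ i.

Section HalfPow.
Variable R : realType.
Implicit Types i j : nat.

Lemma halfpow_gt0 i : 0 < halfpow i :> R.
Proof. by rewrite exprn_gt0 // invr_gt0. Qed.

Lemma halfpow_ge0 i : 0 <= halfpow i :> R.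
Proof. exact/ltW/halfpow_gt0. Qed.

Lemma halfpow_le1 i : halfpow i <= 1 :> R.
Proof. by rewrite exprn_ile1 // ?invr_ge0 ?invf_le1 ?ler1n. Qed.

Lemma halfpowS i : halfpow i.+1 = halfpow i / 2 :> R.
Proof. by rewrite /halfpow exprSr. Qed.

Lemma halfpow_le i j : (i <= j)%N -> halfpow j <= halfpow i :> R.
Proof.
move=> /subnKC <-; rewrite /halfpow exprD ler_piMr ?exprn_ge0 ?invr_ge0 //.
exact: halfpow_le1.
Qed.

Lemma halfpow_small (a : R) : 0 < a -> exists K, halfpow K < a.
Proof.
move=> a0; have ia0 : 0 <= a^-1 by rewrite invr_ge0 ltW.
exists (Num.bound a^-1).
have pow2_ge k : (k%:R : R) <= 2 ^+ k.
  elim: k => [|k ih]; first by rewrite expr0 ler01.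
  by rewrite exprS -natr1 mulr_natl mulr2n lerD // exprn_ege1 // ler1n.
rewrite /halfpow exprVn -[X in _ < X]invrK ltf_pV2 ?posrE ?invr_gt0 ?exprn_gt0 //.
exact: lt_le_trans (archi_boundP ia0) (pow2_ge _).
Qed.

Lemma halfpow_bracket (c r : R) : 0 < r -> r <= c ->
  exists j, r <= c * halfpow j < 2 * r.
Proof.
move=> r0 rc; have c0 : 0 < c by apply: lt_le_trans rc.
have cK : exists K, `[< c * halfpow K < 2 * r >].
  have [K hK] := halfpow_small (divr_gt0 (mulr_gt0 (ltr0n _ 2) r0) c0).
  by exists K; apply/asboolP; rewrite mulrC -ltr_pdivlMr.
case: (ex_minnP cK) => -[|j] /asboolP hj jmin.
  by exists 0%N; rewrite hj andbT /halfpow expr0 mulr1.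
exists j.+1; rewrite hj andbT.
have : ~ (c * halfpow j < 2 * r) by move=> /asboolP /jmin; rewrite ltnn.
by rewrite halfpowS mulrA => /negP; rewrite -leNgt ler_pdivlMr // mulrC.
Qed.

End HalfPow.

Section RComponent.
Context {R : realType} {Y : Type} {d : Y -> Y -> R} {r : R} {U : set Y}.

Lemma r_component_refl x : U x -> r_component d r U x x.
Proof. by move=> Ux; split=> //; split=> //; exact: rst_refl. Qed.

Lemma r_component_sym x y : r_component d r U x y -> r_component d r U y x.
Proof. by move=> [Ux [Uy xy]]; split=> //; split=> //; exact: rst_sym. Qed.

Lemma r_component_trans x y z :
  r_component d r U x y -> r_component d r U y z -> r_component d r U x z.
Proof.
by move=> [Ux [_ xy]] [_ [Uz yz]]; split=> //; split=> //; exact: rst_trans xy yz.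
Qed.

Lemma r_component_step x y z :
  r_component d r U x y -> U z -> d y z < r -> r_component d r U x z.
Proof.
move=> [Ux [Uy xy]] Uz yz; split=> //; split=> //.
by apply: (rst_trans _ _ _ y _ xy); apply: rst_step.
Qed.

End RComponent.

(* Keeps one member of each [E]-class, without changing the union. *)
Lemma prune_family (T : Type) (q : nat) (N : 'I_q -> set T)
    (E : 'I_q -> 'I_q -> Prop) :
  (forall a b, E a b -> E b a) -> (forall a b, E a b -> N a `<=` N b) ->
  exists V : 'I_q -> set T, [/\ forall a, V a = set0 \/ V a = N a,
    forall a y, N a y -> exists b, V b y &
    forall a b y, V a y -> V b y -> E a b -> a = b].
Proof.
move=> Esym EN.
pose V (a : 'I_q) :=
  if pselect (exists2 b : 'I_q, (b < a)%N & E a b) then set0 else N a.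
exists V; split.
- by move=> a; rewrite /V; case: pselect; [left|right].
- suff H k (a : 'I_q) y : val a = k -> N a y -> exists b, V b y.
    by move=> a y; exact: H.
  elim/ltn_ind: k a => k ih a ak Nay.
  case: (pselect (exists2 b : 'I_q, (b < a)%N & E a b)) => [[b ba Eab]|nE].
    by apply: (ih b) (EN _ _ Eab _ Nay) => //; rewrite -ak.
  by exists a; rewrite /V; case: pselect.
- move=> a b y; rewrite /V.
  case: pselect => [_ []|nEa]; case: pselect => [_ _ []|nEb] _ _ Eab.
  case: (ltngtP a b) => [ab|ba|/val_inj //].
  + by case: nEb; exists a => //; exact: Esym.
  + by case: nEa; exists b.
Qed.

Section MetricSpace.
Variables (R : realType) (Y : topologicalType) (d : Y -> Y -> R).
Hypotheses (dm : is_metric d) (dtop : induces_topology d).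

Let d_ge0 x y : 0 <= d x y. Proof. by case: dm. Qed.
Let d_xx x : d x x = 0. Proof. by case: dm => _ dP _ _; apply/dP. Qed.
Let dC x y : d x y = d y x. Proof. by case: dm. Qed.
Let d_tri x y z : d x z <= d x y + d y z. Proof. by case: dm. Qed.

Lemma dball_open x r : open (dball d x r).
Proof.
apply/dtop => y xy; exists (r - d x y); first by rewrite subr_gt0.
by move=> z; rewrite /dball /= => yz; have := d_tri x y z; lra.
Qed.

(* [min (1, d(x, A))], which is [1] for empty [A]. *)
Definition tdist (A : set Y) x : R :=
  inf [set v | v = 1 \/ exists2 z, A z & v = Num.min (d x z) 1].

Let tdist_inf_le A x v :
  (v = 1 \/ exists2 z, A z & v = Num.min (d x z) 1) -> tdist A x <= v.
Proof.
move=> Av; apply: ge_inf Av; exists 0 => _ [->|[z _ ->]]; first exact: ler01.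
by rewrite le_min d_ge0 ler01.
Qed.

Let le_tdist A x b :
  b <= 1 -> (forall z, A z -> b <= Num.min (d x z) 1) -> b <= tdist A x.
Proof.
by move=> b1 bA; apply: lb_le_inf; [exists 1; left | move=> _ [->|[z /bA bz ->]]].
Qed.

Lemma tdist_ge0 A x : 0 <= tdist A x.
Proof. by apply: le_tdist => [|z _]; rewrite ?le_min ?d_ge0 ler01. Qed.

Lemma tdist_le1 A x : tdist A x <= 1.
Proof. exact: tdist_inf_le (or_introl erefl). Qed.

Lemma tdist_le A x z : A z -> tdist A x <= Num.min (d x z) 1.
Proof. by move=> Az; apply: tdist_inf_le; right; exists z. Qed.

Lemma tdist_lipschitz A x y : tdist A x - tdist A y <= d x y.
Proof.
rewrite lerBlDr -lerBlDl; apply: le_tdist => [|z Az].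
  by have := tdist_le1 A x; have := d_ge0 x y; lra.
have := tdist_le x Az; have := d_tri x y z; have := d_ge0 x y.
by case: (leP (d x z) 1); case: (leP (d y z) 1); lra.
Qed.

Lemma tdist_gt0 A x : open (~` A) -> ~ A x -> 0 < tdist A x.
Proof.
move=> /dtop Ao /Ao[r r0 rA].
apply: lt_le_trans (_ : 0 < Num.min r 1) _; first by rewrite lt_min r0 ltr01.
apply: le_tdist => [|z Az]; first by rewrite ge_min lexx orbT.
have rz : r <= d x z by rewrite leNgt; apply/negP => xz; exact: rA z xz Az.
by rewrite le_min !ge_min rz lexx orbT.
Qed.

Lemma lebesgue_number k (U : 'I_k -> set Y) : compact [set: Y] ->
  (forall i, open (U i)) -> covers U ->
  exists2 l, 0 < l & forall y, exists i, dball d y l `<=` U i.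
Proof.
move=> cpt Uo Ucov.
have tdist_open i a : open [set y | a < tdist (~` U i) y].
  by apply: (open_gt_lipschitz dtop ltr01) => x y; rewrite mul1r tdist_lipschitz.
have tdist_pos x : exists i, 0 < tdist (~` U i) x.
  by have [i Uix] := Ucov x; exists i; apply: tdist_gt0; rewrite ?setCK.
have [l l0 hl] := compact_uniform_pos cpt tdist_open tdist_pos.
exists l => // y; have [i li] := hl y; exists i => z yz; apply: contrapT => nUz.
by have := le_trans li (tdist_le y nUz); rewrite le_min leNgt yz.
Qed.

Definition thicken (A : set Y) (s : R) : set Y := \bigcup_(z in A) dball d z s.

Lemma thicken_open A s : open (thicken A s).
Proof. by apply: bigcup_open => z _; exact: dball_open. Qed.

Lemma thicken_sub_dball (A : set Y) x c s :
  (forall z, A z -> d x z <= c) -> thicken A s `<=` dball d x (c + s).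
Proof.
by move=> Ac y [z /Ac xz]; rewrite /dball /= => zy; have := d_tri x z y; lra.
Qed.

Lemma thicken_component_meet r (U : set Y) x1 x2 y :
  thicken (r_component d r U x1) (r / 2) y ->
  thicken (r_component d r U x2) (r / 2) y -> r_component d r U x1 x2.
Proof.
move=> [z1 c1 z1y] [z2 c2 z2y]; rewrite /dball /= in z1y z2y.
have z12 : d z1 z2 < r by have := d_tri z1 y z2; rewrite (dC y z2); lra.
exact: r_component_trans (r_component_step c1 c2.2.1 z12) (r_component_sym c2).
Qed.

(* [V] consists of the [r/2]-thickenings of the [r]-components of the [W t]; the
   thickenings of two components of one [W t] are disjoint, whence the order. *)
Lemma thickened_components_cover n r c (W : 'I_n.+1 -> set Y) :
  compact [set: Y] -> 0 < r -> covers W ->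
  (forall t x z, r_component d r (W t) x z -> d x z <= c) ->
  exists q (V : 'I_q -> set Y) (ctr : 'I_q -> Y),
  [/\ forall a, open (V a), covers V, forall a, V a `<=` dball d (ctr a) (c + r / 2) &
      forall y, (#|[set a | `[< V a y >]]| <= n.+1)%N].
Proof.
move=> cpt r0 Wcov Wdiam.
pose N (p : 'I_n.+1 * Y) := thicken (r_component d r (W p.1) p.2) (r / 2).
have Ncov : covers N.
  move=> y; have [t Wy] := Wcov y; exists (t, y), y; first exact: r_component_refl.
  by rewrite /dball /= d_xx divr_gt0.
have [q [h hcov]] := compact_fin_subcover cpt (fun p => thicken_open _ _) Ncov.
pose E a b := (h a).1 = (h b).1 /\ r_component d r (W (h a).1) (h a).2 (h b).2.
have Esym a b : E a b -> E b a.
  by move=> [ab_col ab]; split=> //; rewrite -ab_col; exact: r_component_sym.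
have EN a b : E a b -> N (h a) `<=` N (h b).
  move=> [ab_col ab] y [z az zy]; exists z => //.
  by rewrite -ab_col; exact: r_component_trans (r_component_sym ab) az.
have [V [V0 Vcov Vuniq]] := prune_family Esym EN.
have VN a : V a `<=` N (h a) by case: (V0 a) => -> // y.
exists q, V, (fun a => (h a).2); split.
- by move=> a; case: (V0 a) => ->; [exact: open0 | exact: thicken_open].
- by move=> y; have [a Nay] := hcov y; exact: Vcov Nay.
- by move=> a y /VN; apply: thicken_sub_dball; exact: Wdiam.
- move=> y; have inj : {in [set a | `[< V a y >]] &, injective (fun a => (h a).1)}.
    move=> a b; rewrite !in_setE => /asboolP Va /asboolP Vb ab_col.
    have Nb := VN _ _ Vb; rewrite /N -ab_col in Nb.
    exact: Vuniq Va Vb (conj ab_col (thicken_component_meet (VN _ _ Va) Nb)).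
  rewrite -(card_in_imset inj).
  by apply: leq_trans (max_card _) _; rewrite card_ord.
Qed.

Lemma covdim_of_ANdim n : compact [set: Y] -> ANdim_le d n -> covdim_le Y n.
Proof.
move=> cpt [C Cdiam] k U Uo Ucov.
have [l l0 hl] := lebesgue_number cpt Uo Ucov.
have C1 : 0 < `|C| + 1 by rewrite ltr_wpDl.
pose r := l / (2 * (`|C| + 1)).
have r0 : 0 < r by rewrite divr_gt0 ?mulr_gt0.
have Crl : C * r + r / 2 < l.
  have -> : l = r * (2 * (`|C| + 1)) by rewrite divfK // mulf_neq0 // gt_eqF.
  have : C * r <= `|C| * r by rewrite ler_wpM2r ?ler_norm // ltW.
  have : 0 <= `|C| * r by rewrite mulr_ge0 // ltW.
  nra.
have [W [Wcov Wdiam]] := Cdiam r r0.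
have [|q [V [ctr [Vo Vcov Vsmall Vorder]]]] :=
  thickened_components_cover (c := C * r) cpt r0 Wcov.
  by move=> t x z xz; exact: Wdiam _ _ _ _ (r_component_refl xz.1) xz.
exists q, V; split=> // a; have [i li] := hl (ctr a); exists i => y /Vsmall Vy.
by apply: li; apply: lt_trans Crl.
Qed.

End MetricSpace.

Definition pseudometric (R : realType) (Y : Type) (rho : Y -> Y -> R) :=
  [/\ forall x y, 0 <= rho x y, forall x, rho x x = 0,
      forall x y, rho x y = rho y x &
      forall x y z, rho x z <= rho x y + rho y z].

Definition dominated (R : realType) (Y : Type) (d rho : Y -> Y -> R) :=
  exists2 c, 0 < c & forall x y, rho x y <= c * d x y.

Lemma open_dominated_lt (R : realType) (Y : topologicalType) (d rho : Y -> Y -> R)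
    p a :
  induces_topology d -> pseudometric rho -> dominated d rho ->
  open [set u | rho p u < a].
Proof.
move=> dtop [_ _ _ rho_tri] [c c0 rho_le].
rewrite (_ : [set u | _] = [set u | - a < - rho p u]).
  apply: (open_gt_lipschitz dtop c0) => x y.
  by have := rho_tri p x y; have := rho_le x y; lra.
by apply/seteqP; split=> u /=; rewrite ltrN2.
Qed.

Definition act_word (L Y : Type) (f : L -> Y -> Y) (w : seq L) (y : Y) : Y :=
  foldr f y w.

Lemma act_word_cat (L Y : Type) (f : L -> Y -> Y) w1 w2 y :
  act_word f (w1 ++ w2) y = act_word f w1 (act_word f w2 y).
Proof. exact: foldr_cat. Qed.

Lemma open_act_word_preimage (Y : topologicalType) (L : Type) (f : L -> Y -> Y)
    (w : seq L) (A : set Y) :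
  (forall a, continuous (f a)) -> open A -> open (act_word f w @^-1` A).
Proof.
move=> f_cont; elim: w A => [|a w ih] A Ao //=.
exact: ih (proj1 (continuousP (f a)) (f_cont a) _ Ao).
Qed.

Section WordMetric.
Variables (R : realType) (Y : topologicalType) (d0 : Y -> Y -> R).
Hypotheses (d0m : is_metric d0) (d0top : induces_topology d0).
Variables (L : finType) (f : L -> Y -> Y).
Hypothesis f_cont : forall a, continuous (f a).
Variable rho : nat -> Y -> Y -> R.
Hypotheses (rho_pm : forall i, pseudometric (rho i))
  (rho_le : forall i x y, rho i x y <= halfpow i)
  (rho_dom : forall i, dominated d0 (rho i))
  (rho0_ge : forall x y, Num.min (d0 x y) 1 <= rho 0%N x y).

Let rho_ge0 i x y : 0 <= rho i x y. Proof. by case: (rho_pm i). Qed.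

Definition wterm x y i w : R :=
  halfpow (size w) * rho i (act_word f w x) (act_word f w y).

Definition wdist x y : R :=
  sup [set wterm x y iw.1 iw.2 | iw in [set: nat * seq L]].

Lemma wterm_le x y i w : wterm x y i w <= halfpow (size w) * halfpow i.
Proof. by rewrite ler_wpM2l ?halfpow_ge0. Qed.

Lemma wterm_le1 x y i w : wterm x y i w <= 1.
Proof.
apply: le_trans (wterm_le x y i w) _.
by rewrite mulr_ile1 ?halfpow_le1 ?halfpow_ge0.
Qed.

Lemma wterm_le_wdist x y i w : wterm x y i w <= wdist x y.
Proof.
apply: sup_upper_bound; last by exists (i, w).
split; first by exists (wterm x y 0 [::]), (0%N, [::]).
by exists 1 => _ [iw _ <-]; exact: wterm_le1.
Qed.

Lemma wdist_le x y b : (forall i w, wterm x y i w <= b) -> wdist x y <= b.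
Proof.
move=> wb; apply: ge_sup; first by exists (wterm x y 0 [::]), (0%N, [::]).
by move=> _ [iw _ <-].
Qed.

Lemma rho_le_wdist i x y : rho i x y <= wdist x y.
Proof. by have := wterm_le_wdist x y i [::]; rewrite /wterm /halfpow expr0 mul1r. Qed.

Lemma wdist_ge0 x y : 0 <= wdist x y.
Proof. exact: le_trans (rho_le_wdist 0%N x y). Qed.

Lemma wdist_le1 x y : wdist x y <= 1.
Proof. by apply: wdist_le => i w; exact: wterm_le1. Qed.

Lemma wdist_metric : is_metric wdist.
Proof.
have wdist_xx x : wdist x x = 0.
  apply/eqP; rewrite eq_le wdist_ge0 andbT; apply: wdist_le => i w.
  by rewrite /wterm; case: (rho_pm i) => _ -> _ _; rewrite mulr0.
have wdist_le_sym x y : wdist x y <= wdist y x.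
  apply: wdist_le => i w; apply: le_trans (wterm_le_wdist y x i w).
  by rewrite /wterm; case: (rho_pm i) => _ _ -> _.
split=> [x y|x y|x y|x y z].
- exact: wdist_ge0.
- split=> [xy|->]; last exact: wdist_xx.
  have := le_trans (rho0_ge x y) (rho_le_wdist 0%N x y); rewrite xy.
  case: d0m => d0_ge0 d0P _ _; rewrite ge_min ler10 orbF => d0xy.
  by apply/d0P/eqP; rewrite eq_le d0xy d0_ge0.
- by apply/eqP; rewrite eq_le !wdist_le_sym.
- apply: wdist_le => i w; rewrite /wterm.
  apply: le_trans (lerD (wterm_le_wdist x y i w) (wterm_le_wdist y z i w)).
  rewrite /wterm -mulrDr ler_wpM2l ?halfpow_ge0 //.
  by case: (rho_pm i) => _ _ _ ->.
Qed.

Lemma wdist_le_tail x y K b : 0 <= b ->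
  (forall i w, (i < K)%N -> (size w < K)%N ->
    rho i (act_word f w x) (act_word f w y) <= b) ->
  wdist x y <= Num.max (halfpow K) b.
Proof.
move=> b0 small; apply: wdist_le => i w; rewrite le_max.
have [iK|Ki] := ltnP i K; last first.
  apply/orP; left; apply: le_trans (wterm_le x y i w) _.
  by rewrite -[halfpow K]mul1r ler_pM ?halfpow_le1 ?halfpow_le ?halfpow_ge0.
have [wK|Kw] := ltnP (size w) K; last first.
  apply/orP; left; apply: le_trans (wterm_le x y i w) _.
  by rewrite -[halfpow K]mulr1 ler_pM ?halfpow_le1 ?halfpow_le ?halfpow_ge0.
apply/orP; right; rewrite -[b]mul1r.
by apply: ler_pM; rewrite ?halfpow_le1 ?small ?halfpow_ge0.
Qed.

Lemma open_word_nbhd y K a :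
  open [set z | forall i w, (i < K)%N -> (size w < K)%N ->
    rho i (act_word f w y) (act_word f w z) < a].
Proof.
rewrite (_ : [set z | _] = [set z | forall (i : 'I_K) (l : 'I_K) (w : l.-tuple L),
    rho i (act_word f w y) (act_word f w z) < a]).
  apply: open_forall_fin => i; apply: open_forall_fin => l; apply: open_forall_fin => w.
  apply: (open_act_word_preimage w (A := [set u | rho i (act_word f w y) u < a]) f_cont).
  exact: open_dominated_lt d0top (rho_pm i) (rho_dom i).
apply/seteqP; split=> z /= near.
  by move=> i l w; apply: near => //; rewrite size_tuple.
by move=> i w iK wK; exact: near (Ordinal iK) (Ordinal wK) (in_tuple w).
Qed.

Lemma wdist_ball_open x r : open (dball wdist x r).
Proof.
rewrite openE => y; rewrite /dball /= => xy.
have s0 : 0 < (r - wdist x y) / 2 by rewrite divr_gt0 // subr_gt0.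
have [K Ks] := halfpow_small s0.
apply: filterS (open_nbhs_nbhs (conj (open_word_nbhd y K _) _)) => [z /= near|].
  have := wdist_le_tail (ltW s0) (fun i w iK wK => ltW (near i w iK wK)).
  rewrite (max_idPr (ltW Ks)); case: wdist_metric => _ _ _ /(_ x y z).
  lra.
by move=> i w _ _; case: (rho_pm i) => _ -> _ _.
Qed.

Lemma wdist_topology : induces_topology wdist.
Proof.
move=> A; split=> [/d0top Ad0 x Ax|Awd].
  have [r r0 rA] := Ad0 x Ax.
  exists (Num.min r 1); first by rewrite lt_min r0 ltr01.
  move=> z xz; apply: rA; rewrite /dball /=.
  have := le_lt_trans (le_trans (rho0_ge x z) (rho_le_wdist 0%N x z)) xz.
  by case: (ltP (d0 x z) 1) => _; rewrite lt_min ?ltxx ?andbF // => /andP[].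
rewrite openE => x Ax; have [r r0 rA] := Awd x Ax.
apply: filterS rA (open_nbhs_nbhs (conj (wdist_ball_open x r) _)).
by rewrite /dball /=; case: wdist_metric => _ /(_ x x) [_ ->].
Qed.

Lemma wdist_act_le a x y : wdist (f a x) (f a y) <= 2 * wdist x y.
Proof.
apply: wdist_le => i w.
have -> : wterm (f a x) (f a y) i w = 2 * wterm x y i (rcons w a).
  rewrite /wterm /act_word !foldr_rcons size_rcons halfpowS mulrA.
  by rewrite [2 * _]mulrC mulfVK // pnatr_eq0.
by rewrite ler_wpM2l // wterm_le_wdist.
Qed.

Lemma wdist_act_word_le w x y :
  wdist (act_word f w x) (act_word f w y) <= 2 ^+ size w * wdist x y.
Proof.
elim: w => [|a w ih] /=; first by rewrite expr0 mul1r.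
apply: le_trans (wdist_act_le _ _ _) _.
by rewrite exprS -mulrA ler_wpM2l.
Qed.

End WordMetric.

Lemma crst_mono (T : Type) (R1 R2 : T -> T -> Prop) :
  (forall a b, R1 a b -> R2 a b) ->
  forall x y, clos_refl_sym_trans T R1 x y -> clos_refl_sym_trans T R2 x y.
Proof.
move=> R12 x y; elim=> {x y} [a b /R12|a|a b _|a b c _ ab _ bc].
- exact: rst_step.
- exact: rst_refl.
- exact: rst_sym.
- exact: rst_trans ab bc.
Qed.

Lemma pseudometricZ (R : realType) (Y : Type) (c : R) (rho : Y -> Y -> R) :
  0 <= c -> pseudometric rho -> pseudometric (fun x y => c * rho x y).
Proof.
move=> c0 [rho_ge0 rho_xx rhoC rho_tri]; split=> [x y|x|x y|x y z].
- exact: mulr_ge0.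
- by rewrite rho_xx mulr0.
- by rewrite rhoC.
- by rewrite -mulrDr ler_wpM2l.
Qed.

Section ColouredPseudometric.
Variables (R : realType) (Y : topologicalType) (d0 : Y -> Y -> R).
Hypotheses (d0m : is_metric d0) (d0top : induces_topology d0)
  (cpt : compact [set: Y]).
Variables (n m : nat) (V : 'I_m -> set Y).
Hypotheses (V_open : forall s, open (V s)) (V_cover : covers V)
  (V_order : forall y, (#|[set s | `[< V s y >]]| <= n.+1)%N).

Lemma exists_bumps : exists phi : 'I_m -> Y -> R,
  [/\ forall s x, 0 <= phi s x <= 1, forall s x, 0 < phi s x -> V s x,
      forall x, exists s, phi s x = 1 &
      exists2 c, 0 < c & forall s x y, `|phi s x - phi s y| <= c * d0 x y].
Proof.
pose g s := tdist d0 (~` V s).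
have g_open s a : open [set y | a < g s y].
  by apply: (open_gt_lipschitz d0top ltr01) => x y; rewrite mul1r tdist_lipschitz.
have g_pos x : exists s, 0 < g s x.
  by have [s Vx] := V_cover x; exists s; apply: tdist_gt0; rewrite ?setCK.
have [mu mu0 mu_le] := compact_uniform_pos cpt g_open g_pos.
have mu_inv_ge0 : 0 <= mu^-1 by rewrite invr_ge0 ltW.
exists (fun s x => Num.min 1 (g s x / mu)); split.
- move=> s x; rewrite ge_min lexx /= andbT le_min ler01 /=.
  by rewrite divr_ge0 ?tdist_ge0 // ltW.
- move=> s x; apply: contraPP => nVx.
  have : g s x <= Num.min (d0 x x) 1 by exact: tdist_le.
  case: d0m => _ d0P _ _; rewrite (proj2 (d0P x x)) // (min_idPl ler01) => gx.
  have gx0 : g s x = 0 by apply/le_anti; rewrite gx tdist_ge0.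
  by rewrite gx0 mul0r (min_idPr ler01) ltxx.
- move=> x; have [s mu_gx] := mu_le x; exists s; apply/min_idPl.
  by rewrite ler_pdivlMr // mul1r.
- exists mu^-1 => [|s x y]; first by rewrite invr_gt0.
  have min1_lip (a b : R) : `|Num.min 1 a - Num.min 1 b| <= `|a - b|.
    have := ler_norm (a - b); have := ler_norm (b - a); rewrite (distrC b a).
    by case: (leP 1 a); case: (leP 1 b) => *; rewrite ler_norml; apply/andP; split; lra.
  apply: le_trans (min1_lip _ _) _; rewrite -mulrBl normrM (ger0_norm mu_inv_ge0).
  rewrite mulrC ler_wpM2l // ler_norml.
  have := tdist_lipschitz d0m (~` V s) x y; have := tdist_lipschitz d0m (~` V s) y x.
  by case: d0m => _ _ -> _; rewrite /g; lra.
Qed.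

Section Colouring.
Variable phi : 'I_m -> Y -> R.
Hypotheses (phi01 : forall s x, 0 <= phi s x <= 1)
  (phi_pos : forall s x, 0 < phi s x -> V s x) (phi1 : forall x, exists s, phi s x = 1).

Definition bump_dist x y : R := \big[Num.max/0]_s `|phi s x - phi s y|.

Lemma bump_dist_ge s x y : `|phi s x - phi s y| <= bump_dist x y.
Proof. exact: le_bigmax. Qed.

Lemma bump_dist_le x y b :
  0 <= b -> (forall s, `|phi s x - phi s y| <= b) -> bump_dist x y <= b.
Proof. by move=> b0 xyb; apply: bigmax_le. Qed.

Lemma bump_dist_le1 x y : bump_dist x y <= 1.
Proof.
apply: bump_dist_le => // s; have /andP[? ?] := phi01 s x; have /andP[? ?] := phi01 s y.
by rewrite ler_norml; apply/andP; split; lra.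
Qed.

Lemma bump_dist_pseudometric : pseudometric bump_dist.
Proof.
have ge0 x y : 0 <= bump_dist x y by rewrite /bump_dist bigmax_idl le_max lexx.
split=> [x y|x|x y|x y z] //.
- by apply/eqP; rewrite eq_le ge0 andbT bump_dist_le // => s; rewrite subrr normr0.
- by apply: eq_bigr => s _; exact: distrC.
- apply: bump_dist_le => [|s]; first by rewrite addr_ge0.
  apply: le_trans (ler_distD (phi s y) _ _) _.
  exact: lerD (bump_dist_ge _ _ _) (bump_dist_ge _ _ _).
Qed.

Definition colour (t : 'I_n.+1) : set Y :=
  [set x | forall s, ~ (t%:R / n.+2%:R < phi s x <= t.+1%:R / n.+2%:R)].

Let slab_lt1 (t : 'I_n.+1) : t.+1%:R / n.+2%:R < 1 :> R.
Proof. by rewrite ltr_pdivrMr // mul1r ltr_nat ltnS. Qed.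

(* At [x] some bump equals [1] and at most [n + 1] bumps are positive, so one of
   the [n + 1] slabs is missed. *)
Lemma colour_cover : covers colour.
Proof.
move=> x; apply: contrapT => nocol.
have hit (t : 'I_n.+1) : exists s, t%:R / n.+2%:R < phi s x <= t.+1%:R / n.+2%:R.
  by apply: contrapT => nt; apply: nocol; exists t => s hs; apply: nt; exists s.
have [F hF] := choice hit.
have F_inj : injective F.
  move=> t t' Ftt'; have := hF t; have := hF t'.
  rewrite Ftt' => /andP[a1 a2] /andP[b1 b2].
  have := lt_le_trans b1 a2; have := lt_le_trans a1 b2.
  rewrite !ltr_pM2r ?invr_gt0 // !ltr_nat !ltnS => t't tt'.
  by apply/val_inj/eqP; rewrite eqn_leq tt' t't.
have [s1 phi1x] := phi1 x.
have s1F : s1 \notin F @: 'I_n.+1.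
  apply/imsetP => -[t _ s1t]; have /andP[_] := hF t; rewrite -s1t phi1x.
  by apply/negP; rewrite -ltNge.
pose B := [set s | `[< V s x >]]%SET.
have sub : s1 |: (F @: 'I_n.+1) \subset B.
  apply/fintype.subsetP => s; rewrite in_setU1 inE => /orP[/eqP->|/imsetP[t _ ->]];
    apply/asboolP; apply: phi_pos; first by rewrite phi1x ltr01.
  by have /andP[tF _] := hF t; apply: le_lt_trans tF; rewrite divr_ge0.
have eB : #|B| = #|[set s | `[< V s x >]]|.
  apply: eq_card => s; rewrite !inE.
  by apply/idP/idP => Vsx; [apply: mem_set | move/set_mem: Vsx].
have := subset_leq_card sub; rewrite cardsU1 s1F card_imset // card_ord eB => n2B.
by have := leq_trans n2B (V_order x); rewrite add1n ltnn.
Qed.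

(* A step below [1/(n+2)] cannot jump over the [t]-th slab, so [(t+1)/(n+2) < phi s]
   is invariant along chains in [colour t]. *)
Lemma colour_chain t x y :
  clos_refl_sym_trans Y (r_close bump_dist n.+2%:R^-1 (colour t)) x y ->
  exists s, V s x /\ V s y.
Proof.
pose th : R := t.+1%:R / n.+2%:R.
have th_split : th = t%:R / n.+2%:R + n.+2%:R^-1 by rewrite /th -natr1 mulrDl mul1r.
have step a b : r_close bump_dist n.+2%:R^-1 (colour t) a b ->
    forall s, th < phi s a -> th < phi s b.
  move=> [_ cb ab] s tha; have := le_lt_trans (bump_dist_ge s a b) ab.
  rewrite ltr_norml => /andP[_ ab_lt]; have := cb s; rewrite -/th => nslab.
  rewrite ltNge; apply/negP => phib; apply: nslab; rewrite phib andbT.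
  move: tha ab_lt; rewrite th_split; set u := t%:R / _; set v := _^-1; lra.
have [_ _ bdC _] := bump_dist_pseudometric.
have inv a b : clos_refl_sym_trans Y (r_close bump_dist n.+2%:R^-1 (colour t)) a b ->
    forall s, th < phi s a <-> th < phi s b.
  elim=> {a b} [a b ab s|a s|a b _ ab s|a b c _ ab _ bc s].
  - by split; apply: step => //; case: ab => ca cb; rewrite bdC; split.
  - by [].
  - exact: iff_sym.
  - exact: iff_trans (ab s) (bc s).
move=> /inv xy; have [s phi1x] := phi1 x; exists s.
have thx : th < phi s x by rewrite phi1x slab_lt1.
have th_ge0 : 0 <= th by rewrite divr_ge0.
by split; apply: phi_pos; apply: le_lt_trans th_ge0 _; [|apply/xy].
Qed.

End Colouring.

Lemma exists_coloured_pseudometric :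
  exists (sigma : Y -> Y -> R) (W : 'I_n.+1 -> set Y),
  [/\ pseudometric sigma, forall x y, sigma x y <= 1, dominated d0 sigma,
      covers W &
      forall t x y, clos_refl_sym_trans Y (r_close sigma n.+2%:R^-1 (W t)) x y ->
      exists s, V s x /\ V s y].
Proof.
have [phi [phi01 phi_pos phi1 [c c0 phi_lip]]] := exists_bumps.
exists (bump_dist phi), (colour phi); split.
- exact: bump_dist_pseudometric.
- exact: bump_dist_le1.
- exists c => // x y; apply: bump_dist_le => [|s]; last exact: phi_lip.
  by case: d0m => d0_ge0 _ _ _; exact: mulr_ge0 (ltW c0) (d0_ge0 x y).
- exact: colour_cover.
- exact: colour_chain.
Qed.

End ColouredPseudometric.

Section GroupWords.
Variables (G Y : Type) (mul : G -> G -> G) (one : G) (inv : G -> G)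
  (act : G -> Y -> Y).
Hypotheses (G_group : is_group mul one inv) (G_act : is_action mul one act).

Lemma act_invK g : cancel (act g) (act (inv g)).
Proof.
by case: G_act => act1 actM; case: G_group => _ _ _ mulVg _ y; rewrite -actM mulVg act1.
Qed.

Lemma act_invVK g : cancel (act (inv g)) (act g).
Proof.
by case: G_act => act1 actM; case: G_group => _ _ _ _ mulgV y; rewrite -actM mulgV act1.
Qed.

Variables (L : Type) (letter : L -> G) (S : set G).
Hypothesis S_letters : forall s, S s -> exists a b, letter a = s /\ letter b = inv s.

Lemma generated_act_word g : generated mul one inv S g ->
  exists w, act g =1 act_word (fun a => act (letter a)) w.
Proof.
move=> gen_g; pose word h := exists w, act h =1 act_word (fun a => act (letter a)) w.
suff [] : word g /\ word (inv g) by [].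
case: G_act => act1 actM; elim: gen_g => {g}.
- by move=> s /S_letters[a [b [<- <-]]]; split; [exists [:: a] | exists [:: b]].
- split; exists [::] => y /=; first exact: act1.
  by rewrite -{1}(act1 y) act_invK.
- move=> a _ [[w aw] wa']; split=> //; exists w => y.
  by rewrite -aw -{1}(act_invK a y) act_invK.
- move=> a b _ [[w1 aw1] [w1' aw1']] _ [[w2 bw2] [w2' bw2']].
  split; [exists (w1 ++ w2) | exists (w2' ++ w1')] => y; rewrite act_word_cat.
    by rewrite -bw2 -aw1 actM.
  have yz : act (mul a b) (act (inv b) (act (inv a) y)) = y by rewrite actM !act_invVK.
  by rewrite -aw1' -bw2' -{1}yz act_invK.
Qed.

End GroupWords.

Lemma finitely_generated_words (G Y : Type) (mul : G -> G -> G) (one : G)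
    (inv : G -> G) (act : G -> Y -> Y) :
  is_group mul one inv -> is_action mul one act -> finitely_generated mul one inv ->
  exists (L : finType) (letter : L -> G),
    forall g, exists w, act g =1 act_word (fun a => act (letter a)) w.
Proof.
move=> G_group G_act [S [S_fin S_gen]].
have [s S_s] := proj1 (@finite_seqP {classic G} S) S_fin.
pose letter (a : 'I_(size s) + 'I_(size s)) :=
  match a with inl i => nth one s i | inr i => inv (nth one s i) end.
have S_letters g : S g -> exists a b, letter a = g /\ letter b = inv g.
  rewrite S_s => sg; have i_lt : (index (g : {classic G}) s < size s)%N.
    by rewrite index_mem.
  have gE : nth one s (index (g : {classic G}) s) = g :=
    nth_index (one : {classic G}) sg.
  by exists (inl (Ordinal i_lt)), (inr (Ordinal i_lt)); rewrite /= gE.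
exists (('I_(size s) + 'I_(size s))%type : finType), letter => g.
by have [w gw] := generated_act_word G_group G_act S_letters (S_gen g); exists w.
Qed.

Lemma exists_least (P : nat -> Prop) :
  exists n0, forall n, P n -> P n0 /\ (n0 <= n)%N.
Proof.
have [[n Pn]|noP] := pselect (exists n, P n); last first.
  by exists 0%N => n Pn; case: noP; exists n.
have [m /asboolP Pm m_least] :=
  ex_minnP (ex_intro (fun n => `[< P n >]) n (asboolT Pn)).
by exists m => n' /asboolT /m_least.
Qed.

Section Construction.
Variables (R : realType) (Y : topologicalType) (d0 : Y -> Y -> R).
Hypotheses (d0m : is_metric d0) (d0top : induces_topology d0)
  (cpt : compact [set: Y]).
Variables (L : finType) (f : L -> Y -> Y).
Hypothesis f_cont : forall a, continuous (f a).
Variable n : nat.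

Definition controls (prev : nat -> Y -> Y -> R) (j : nat) (rho : Y -> Y -> R) :=
  exists W : 'I_n.+1 -> set Y, covers W /\
    forall t x y,
      clos_refl_sym_trans Y (r_close rho (halfpow j / n.+2%:R) (W t)) x y ->
    forall i w, (i < j)%N -> (size w < j)%N ->
      prev i (act_word f w x) (act_word f w y) <= halfpow j.

Lemma exists_controlling prev j : covdim_le Y n ->
  (forall i, pseudometric (prev i)) -> (forall i, dominated d0 (prev i)) ->
  exists rho, [/\ pseudometric rho, forall x y, rho x y <= halfpow j,
    dominated d0 rho & controls prev j rho].
Proof.
move=> dim prev_pm prev_dom.
pose O x := [set z | forall i w, (i < j)%N -> (size w < j)%N ->
  prev i (act_word f w x) (act_word f w z) < halfpow j / 2].
have O_open x : open (O x) := open_word_nbhd d0top f_cont prev_pm prev_dom x j _.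
have O_cover : covers O.
  move=> x; exists x => i w _ _.
  by case: (prev_pm i) => _ -> _ _; rewrite divr_gt0 ?halfpow_gt0.
have [p [h hO]] := compact_fin_subcover cpt O_open O_cover.
have [m [V [V_open V_cover V_ref V_order]]] := dim _ _ (fun a => O_open (h a)) hO.
have V_small s y z : V s y -> V s z -> forall i w, (i < j)%N -> (size w < j)%N ->
    prev i (act_word f w y) (act_word f w z) <= halfpow j.
  move=> Vy Vz i w ij wj; have [a Va] := V_ref s.
  have := Va _ Vy i w ij wj; have := Va _ Vz i w ij wj.
  case: (prev_pm i) => _ _ prevC prev_tri.
  have := prev_tri (act_word f w y) (act_word f w (h a)) (act_word f w z).
  by rewrite (prevC _ (act_word f w (h a))); lra.
have [sigma [W [sigma_pm sigma_le1 [c c0 sigma_dom] W_cover W_chain]]] :=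
  exists_coloured_pseudometric d0m d0top cpt V_open V_cover V_order.
exists (fun x y => halfpow j * sigma x y); split.
- exact: pseudometricZ (halfpow_ge0 _ _) sigma_pm.
- by move=> x y; rewrite -[X in _ <= X]mulr1 ler_wpM2l ?halfpow_ge0.
- exists (halfpow j * c) => [|x y]; first by rewrite mulr_gt0 ?halfpow_gt0.
  by rewrite -mulrA ler_wpM2l ?halfpow_ge0.
- exists W; split=> // t x y chain.
  have [|s [Vx Vy]] := W_chain t x y; last exact: V_small Vx Vy.
  apply: crst_mono chain => a b [Wa Wb ab]; split=> //.
  by rewrite -(ltr_pM2l (halfpow_gt0 R j)).
Qed.

Definition rho0 x y : R := Num.min (d0 x y) 1.

Lemma rho0_pseudometric : pseudometric rho0.
Proof.
case: d0m => d0_ge0 d0P d0C d0_tri; rewrite /rho0; split=> [x y|x|x y|x y z].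
- by rewrite le_min d0_ge0 ler01.
- by rewrite (proj2 (d0P x x)) // (min_idPl ler01).
- by rewrite d0C.
- have := d0_tri x y z; have := d0_ge0 x y; have := d0_ge0 y z.
  by case: (leP (d0 x z) 1); case: (leP (d0 x y) 1); case: (leP (d0 y z) 1); lra.
Qed.

Lemma rho0_dominated : dominated d0 rho0.
Proof. by exists 1 => // x y; rewrite mul1r ge_min lexx. Qed.

Lemma exists_next prev j : exists rho,
  [/\ pseudometric rho, forall x y, rho x y <= halfpow j, dominated d0 rho &
    [/\ covdim_le Y n, forall i, pseudometric (prev i) &
      forall i, dominated d0 (prev i)] -> controls prev j rho].
Proof.
have [[dim prev_pm prev_dom]|nohyp] := pselect [/\ covdim_le Y n,
    forall i, pseudometric (prev i) & forall i, dominated d0 (prev i)].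
  by have [rho [? ? ? ?]] := exists_controlling j dim prev_pm prev_dom; exists rho.
exists (fun _ _ => 0); split=> [|x y||/nohyp//].
- by split=> // *; rewrite addr0.
- exact: halfpow_ge0.
- by exists 1 => // x y; case: d0m => d0_ge0 _ _ _; rewrite mul1r.
Qed.

Definition next prev j := projT1 (cid (exists_next prev j)).

Lemma nextP prev j :
  [/\ pseudometric (next prev j), forall x y, next prev j x y <= halfpow j,
    dominated d0 (next prev j) &
    [/\ covdim_le Y n, forall i, pseudometric (prev i) &
      forall i, dominated d0 (prev i)] -> controls prev j (next prev j)].
Proof. exact: projT2 (cid (exists_next prev j)). Qed.

(* [approx j i] is the [i]-th pseudometric of the sequence as soon as [i <= j]. *)
Fixpoint approx j : nat -> Y -> Y -> R :=
  if j is j'.+1 then fun i => if (i <= j')%N then approx j' i else next (approx j') j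
  else fun _ => rho0.

Definition rhoseq i := approx i i.

Lemma approx_stable j i : (i <= j)%N -> approx j i = rhoseq i.
Proof.
elim: j => [|j ih]; first by rewrite leqn0 => /eqP ->.
by rewrite leq_eqVlt => /orP[/eqP -> //|ij] /=; rewrite -ltnS ij ih.
Qed.

Lemma approx_admissible j i :
  pseudometric (approx j i) /\ dominated d0 (approx j i).
Proof.
elim: j i => [|j ih] i /=; first exact: conj rho0_pseudometric rho0_dominated.
by case: ifP => _; [exact: ih | case: (nextP (approx j) j.+1)].
Qed.

Lemma rhoseq_pseudometric i : pseudometric (rhoseq i).
Proof. exact: (approx_admissible i i).1. Qed.

Lemma rhoseq_dominated i : dominated d0 (rhoseq i).
Proof. exact: (approx_admissible i i).2. Qed.

Lemma rhoseq_le i x y : rhoseq i x y <= halfpow i.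
Proof.
case: i => [|j]; first by rewrite /rhoseq /= /rho0 /halfpow expr0 ge_min lexx orbT.
by rewrite /rhoseq /= ltnn; case: (nextP (approx j) j.+1).
Qed.

Lemma rhoseq_controls j : covdim_le Y n -> controls (approx j) j.+1 (rhoseq j.+1).
Proof.
move=> dim; rewrite /rhoseq /= ltnn; case: (nextP (approx j) j.+1) => _ _ _; apply.
by split=> // i; case: (approx_admissible j i).
Qed.

Lemma rhoseq0_ge x y : Num.min (d0 x y) 1 <= rhoseq 0%N x y.
Proof. exact: lexx. Qed.

Lemma wdist_rhoseq_metric : is_metric (wdist f rhoseq).
Proof.
apply: (wdist_metric d0m f rhoseq_pseudometric rhoseq_le); exact: rhoseq0_ge.
Qed.

Lemma wdist_rhoseq_topology : induces_topology (wdist f rhoseq).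
Proof.
apply: (wdist_topology d0m d0top f_cont rhoseq_pseudometric rhoseq_le rhoseq_dominated).
exact: rhoseq0_ge.
Qed.

Lemma ANdim_le_wdist : covdim_le Y n -> ANdim_le (wdist f rhoseq) n.
Proof.
move=> dim; pose k : R := n.+2%:R; have k0 : 0 < k by rewrite ltr0n.
exists (2 * k) => r r0.
have [big|small] := ltP (halfpow 1 / k) r.
  exists (fun _ => setT); split=> [y|t x y z _ _]; first by exists ord0.
  apply: le_trans (wdist_le1 f rhoseq_le y z) _.
  move: big; rewrite /halfpow expr1 ltr_pdivrMr // => big.
  lra.
have [j /andP[rj j2r]] := halfpow_bracket r0 small.
have scale : halfpow 1 / k * halfpow j = halfpow j.+1 / k.
  by rewrite /halfpow [in RHS]exprS expr1; ring.
rewrite scale in rj j2r.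
have [W [W_cover W_control]] := rhoseq_controls j dim.
exists W; split=> // t x y z [_ [_ xy]] [_ [_ xz]].
have chain : clos_refl_sym_trans Y
    (r_close (rhoseq j.+1) (halfpow j.+1 / n.+2%:R) (W t)) y z.
  apply: crst_mono (rst_trans _ _ _ _ _ (rst_sym _ _ _ _ xy) xz).
  move=> a b [Wa Wb ab]; split=> //.
  exact: le_lt_trans (rho_le_wdist f rhoseq_le _ a b) (lt_le_trans ab rj).
apply: le_trans (wdist_le_tail rhoseq_pseudometric rhoseq_le (K := j.+1)
  (halfpow_ge0 R j.+1) _) _.
  move=> i w ij wj; rewrite -(approx_stable (j := j)); last by rewrite -ltnS.
  exact: W_control chain _ _ ij wj.
by rewrite maxxx; apply/ltW; move: j2r; rewrite ltr_pdivrMr //; lra.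
Qed.

End Construction.

Lemma ANdim_le_mono (R : realType) (Y : Type) (d : Y -> Y -> R) n0 n :
  ANdim_le d n0 -> (n0 <= n)%N -> ANdim_le d n.
Proof.
move=> [C hC] n0n; exists C => r r0; have [U [Ucov Udiam]] := hC r r0.
exists (fun t : 'I_n.+1 => if (t < n0.+1)%N then U (inord t) else set0); split.
  move=> y; have [t Uy] := Ucov y; exists (widen_ord (n0n : (n0.+1 <= n.+1)%N) t).
  by rewrite /= ltn_ord inord_val.
by move=> t x y z; case: ifP => _; [exact: Udiam | move=> []].
Qed.

Theorem lemma8p6 (R : realType) (G : Type) (mul : G -> G -> G) (one : G)
    (inv : G -> G) (Y : topologicalType) (act : G -> Y -> Y) :
  is_group mul one inv -> finitely_generated mul one inv ->
  is_action mul one act -> (forall g, continuous (act g)) ->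
  compact [set: Y] -> metrisable R Y ->
  exists d : Y -> Y -> R,
    [/\ is_metric d, induces_topology d,
        forall g, lipschitz d (act g) &
        forall n : nat, covdim_le Y n <-> ANdim_le d n].
Proof.
move=> G_group G_fg G_act act_cont cpt [d0 [d0m d0top]].
have [L [letter act_words]] := finitely_generated_words G_group G_act G_fg.
pose f a := act (letter a).
have f_cont a : continuous (f a) := act_cont _.
have [n0 n0_least] := exists_least (covdim_le Y).
have D_metric := wdist_rhoseq_metric d0m d0top cpt f_cont n0.
have D_top := wdist_rhoseq_topology d0m d0top cpt f_cont n0.
exists (wdist f (rhoseq d0m d0top cpt f_cont n0)); split=> //.
- move=> g; have [w gw] := act_words g; exists (2 ^+ size w) => x y.
  by rewrite !gw; have := wdist_act_word_le f (rhoseq_le d0m d0top cpt f_cont n0) w x y.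
- move=> n; split=> [/n0_least[dim0 n0n]|]; last exact: covdim_of_ANdim.
  exact: ANdim_le_mono (ANdim_le_wdist d0m d0top cpt f_cont dim0) n0n.
Qed.
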